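(* For every $\beta\in[0,\infty)$, $N\in\mathbb N$, $(x,y)\in\widehat\Lambda_N\times\widehat\Lambda_N$, $t\ge0$ and every symmetric function $f:\widehat\Lambda_N\times\widehat\Lambda_N\to\mathbb R$ (i.e. $f(a,b)=f(b,a)$), $$\mathsf E^N\big[f(X^{N,x}_t,Y^{N,y}_t)\big]=\widetilde{\mathsf E}^N\big[f(\widetilde X^{N,U}_t,\widetilde Y^{N,V}_t)\big],$$ where $(U,V)$ is independent of the dynamics and equals $(x,y)$ or $(y,x)$ with probability $1/2$ each.
   Context: Fix $\alpha,\alpha_L,\alpha_R>0$, $\beta\ge0$, $\Lambda_N=\{1,\dots,N-1\}$, $\widehat\Lambda_N=\{0,\dots,N\}$. $A^N$ acts on $f:\widehat\Lambda_N\to\mathbb R$ by $A^Nf(x)=\mathbf 1_{\{x\in\Lambda_N\}}N^2\sum_{z\in\Lambda_N,|z-x|=1}\alpha(f(z)-f(x))+\mathbf 1_{\{x=1\}}N^{2-\beta}\alpha_L(f(0)-f(1))+\mathbf 1_{\{x=N-1\}}N^{2-\beta}\alpha_R(f(N)-f(N-1))$. $(X^{N,x}_t,Y^{N,y}_t)_{t\ge0}$, with law/expectation $\mathsf P^N,\mathsf E^N$, is the Markov process on $\widehat\Lambda_N^2$ started at $(x,y)$ with generator $B^Nf(x,y)=A^Nf(\cdot,y)(x)+A^Nf(x,\cdot)(y)+N^2\mathbf 1_{\{x,y\notin\{0,N\}\}}\mathbf 1_{\{|x-y|=1\}}\big((f(x,x)-f(x,y))+(f(y,y)-f(x,y))\big)$.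 $(\widetilde X^{N,x}_t,\widetilde Y^{N,y}_t)_{t\ge0}$, with law/expectation $\widetilde{\mathsf P}^N,\widetilde{\mathsf E}^N$, is the (hierarchical ''first/second class'') Markov process on $\widehat\Lambda_N^2$ started at $(x,y)$ with generator $C^Nf(x,y)=A^Nf(\cdot,y)(x)+A^Nf(x,\cdot)(y)+N^2\mathbf 1_{\{x,y\in\Lambda_N\}}\mathbf 1_{\{|x-y|=1\}}\,2\,(f(x,x)-f(x,y))$. *)

From HB Require Import structures.
From mathcomp Require Import all_boot all_order all_algebra.
From mathcomp Require Import all_classical all_reals all_analysis.
Set Implicit Arguments. Unset Strict Implicit. Unset Printing Implicit Defensive.
Import Order.TTheory GRing.Theory Num.Theory.
Import numFieldNormedType.Exports.
Local Open Scope ring_scope.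

(* Sites \hat\Lambda_N = {0,...,N} are 'I_N.+1 ; pairs of sites form the
   finite state space of the two-particle processes. *)
Definition site (N : nat) := 'I_N.+1.
Definition pstate (N : nat) := (site N * site N)%type.

Section Gen.
Variable R : realType.
Variables (alpha alphaL alphaR beta : R).

Definition genA (N : nat) (f : site N -> R) (x : site N) : R :=
  (if (0 < x < N)%N then
     (N%:R) ^+ 2 * \sum_(z : site N | (0 < z < N)%N && ((z == x.+1 :> nat) || (x == z.+1 :> nat)))
        alpha * (f z - f x)
   else 0)
  + (if (x == 1%N :> nat) then powR (N%:R) (2 - beta) * alphaL * (f ord0 - f x) else 0)
  + (if (x == N.-1 :> nat) then powR (N%:R) (2 - beta) * alphaR * (f ord_max - f x) else 0).

Definition genB (N : nat) (f : pstate N -> R) (p : pstate N) : R :=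
  let x := p.1 in let y := p.2 in
  genA (fun a => f (a, y)) x + genA (fun b => f (x, b)) y
  + (N%:R) ^+ 2 *
    (if [&& (x != 0%N :> nat), (x != N :> nat), (y != 0%N :> nat), (y != N :> nat)
           & (x == y.+1 :> nat) || (y == x.+1 :> nat)]
     then (f (x, x) - f (x, y)) + (f (y, y) - f (x, y)) else 0).

(* generator C^N (hierarchical first/second class dynamics) *)
Definition genC (N : nat) (f : pstate N -> R) (p : pstate N) : R :=
  let x := p.1 in let y := p.2 in
  genA (fun a => f (a, y)) x + genA (fun b => f (x, b)) y
  + (N%:R) ^+ 2 *
    (if [&& (0 < x < N)%N, (0 < y < N)%N
           & (x == y.+1 :> nat) || (y == x.+1 :> nat)]
     then 2 * (f (x, x) - f (x, y)) else 0).

(* Transition semigroup of the finite-state continuous-time Markov chain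
   with generator G:  E_s[f(Z_t)] = (e^{tG} f)(s) = sum_k t^k/k! (G^k f)(s). *)
Definition semigroup (S : finType) (G : (S -> R) -> (S -> R)) (t : R)
    (f : S -> R) (s : S) : R :=
  limn (fun n : nat => \sum_(k < n) t ^+ k / (k`!)%:R * iter k G f s).
End Gen.

(* Write S g (x, y) := (g (x, y) + g (y, x)) / 2 for the symmetrisation of a
   function of two sites.  A direct computation with the generators gives the
   intertwining B (S g) = S (C g): the free motions agree, and the two
   coalescence terms of B, (g(x,x) - g(x,y)) + (g(y,y) - g(x,y)), are the
   average of the coalescence terms 2 (g(x,x) - g(x,y)) of C at (x, y) and
   2 (g(y,y) - g(y,x)) of C at (y, x).  Hence B^k (S g) = S (C^k g) for every
   k.  Since C is linear on a finite-dimensional space, its exponential series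
   converges, so the averaging commutes with the limit defining e^{tC}; for
   symmetric f we have S f = f. *)

From HB Require Import structures.
From mathcomp Require Import all_boot all_order all_algebra.
From mathcomp Require Import all_classical all_reals all_analysis.
From mathcomp Require Import ring lra zify.
Import Order.TTheory GRing.Theory Num.Theory.
Import numFieldNormedType.Exports.
Local Open Scope ring_scope.

Section LinearSemigroup.
Context {R : realType} {S : finType}.

Definition l1norm (g : S -> R) : R := \sum_s `|g s|.

Lemma ler_norm_l1norm (g : S -> R) s : `|g s| <= l1norm g.
Proof. by rewrite /l1norm (bigD1 s) //= lerDl sumr_ge0. Qed.

Lemma sum_funE (I : finType) (F : I -> S -> R) s :
  (\sum_i F i) s = \sum_i F i s.
Proof. by elim/big_rec2: _ => // i u v _ <-. Qed.

Lemma fun_delta_decomp (g : S -> R) : g = \sum_q g q *: (fun s => (s == q)%:R).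
Proof.
apply/funext => s; rewrite sum_funE.
transitivity (\sum_q g q * (s == q)%:R) => //.
rewrite (bigD1 s) //= eqxx mulr1 big1 ?addr0 // => q /negbTE.
by rewrite eq_sym => ->; rewrite mulr0.
Qed.

Variable G : {linear (S -> R) -> (S -> R)}.

Let delta (q : S) : S -> R := fun s => (s == q)%:R.
Let K : R := \sum_q l1norm (G (delta q)).

Lemma linear_fun_decomp (g : S -> R) s : G g s = \sum_q g q * G (delta q) s.
Proof.
rewrite {1}(fun_delta_decomp g) linear_sum sum_funE.
by apply: eq_bigr => q _; rewrite linearZ.
Qed.

Let K_ge0 : 0 <= K.
Proof. by apply: sumr_ge0 => q _; apply: sumr_ge0. Qed.

Lemma l1norm_linear_le (g : S -> R) : l1norm (G g) <= K * l1norm g.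
Proof.
have l1norm_delta_le q : l1norm (G (delta q)) <= K.
  rewrite /K (bigD1 q) //= lerDl sumr_ge0 // => r _.
  exact: sumr_ge0.
apply: (@le_trans _ _ (\sum_s \sum_q `|g q| * `|G (delta q) s|)).
  apply: ler_sum => s _; rewrite linear_fun_decomp.
  by apply: le_trans (ler_norm_sum _ _ _) _; under eq_bigr do rewrite normrM.
rewrite exchange_big /= /l1norm mulr_sumr; apply: ler_sum => q _.
rewrite -mulr_sumr [K * _]mulrC; apply: ler_wpM2l => //; exact: l1norm_delta_le.
Qed.

Lemma l1norm_iter_le k (g : S -> R) : l1norm (iter k G g) <= K ^+ k * l1norm g.
Proof.
elim: k => [|k IHk]; first by rewrite mul1r.
rewrite iterS exprS -mulrA.
by apply: le_trans (l1norm_linear_le _) _; apply: ler_wpM2l.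
Qed.

Lemma semigroup_series_cvg (t : R) (g : S -> R) s :
  cvgn (fun n : nat => \sum_(k < n) t ^+ k / k`!%:R * iter k G g s).
Proof.
set u := fun k : nat => t ^+ k / k`!%:R * iter k G g s.
have -> : (fun n : nat => \sum_(k < n) u k) = series u.
  by apply/funext => n; rewrite /series /= big_mkord.
have coeff_ge0 x n : 0 <= x -> 0 <= x ^+ n / n`!%:R :> R.
  by move=> x_ge0; rewrite mulr_ge0 ?exprn_ge0 ?invr_ge0.
apply: normed_cvg; apply: (@series_le_cvg _ _ (l1norm g *: exp_coeff (`|t| * K))).
- by move=> n; exact: normr_ge0.
- by move=> n; rewrite /exp_coeff /= mulr_ge0 ?sumr_ge0 ?coeff_ge0 ?mulr_ge0.
- move=> n; rewrite /u /exp_coeff /= normrM normrM normrX normfV normr_nat.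
  rewrite [X in _ <= X](_ : _ = `|t| ^+ n / n`!%:R * (K ^+ n * l1norm g)).
    apply: ler_wpM2l; first exact: coeff_ge0.
    exact: le_trans (ler_norm_l1norm _ _) (l1norm_iter_le _ _).
  transitivity (l1norm g * ((`|t| * K) ^+ n / n`!%:R)) => //.
  by rewrite exprMn; ring.
- exact: is_cvg_seriesZ (is_cvg_series_exp_coeff _).
Qed.

End LinearSemigroup.

Section LinearCombination.
Context {R : realType} {T U : Type} (G : {linear (T -> R) -> (U -> R)}).

Lemma linear_comb (a : R) (u v : T -> R) x :
  G (fun z => a *: u z + v z) x = a *: G u x + G v x.
Proof. by rewrite -[fun z => _]/(a *: u + v) linearP. Qed.

Lemma linear_avg (u v : T -> R) x :
  G (fun z => (u z + v z) / 2) x = (G u x + G v x) / 2.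
Proof.
have -> : (fun z => (u z + v z) / 2) = 2^-1 *: (u + v).
  by apply/funext => z; rewrite mulrC.
by rewrite linearZ linearD /= mulrC.
Qed.

End LinearCombination.

Section Symmetrization.
Context {R : realType} {S : finType}.

Definition symmetrize (sigma : S -> S) (g : S -> R) : S -> R :=
  fun s => (g s + g (sigma s)) / 2.

Lemma symmetrize_id {sigma : S -> S} (g : S -> R) :
  (forall s, g (sigma s) = g s) -> symmetrize sigma g = g.
Proof. by move=> g_inv; apply/funext => s; rewrite /symmetrize g_inv; lra. Qed.

Context {sigma : S -> S} {G : (S -> R) -> S -> R}
  {H : {linear (S -> R) -> (S -> R)}}.
Hypothesis G_symmetrize : forall g, G (symmetrize sigma g) = symmetrize sigma (H g).

Lemma iter_symmetrize k (g : S -> R) :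
  iter k G (symmetrize sigma g) = symmetrize sigma (iter k H g).
Proof. by elim: k => // k IHk; rewrite !iterS IHk G_symmetrize. Qed.

Lemma semigroup_symmetrize t (g : S -> R) s :
  semigroup G t (symmetrize sigma g) s
  = (semigroup H t g s + semigroup H t g (sigma s)) / 2.
Proof.
rewrite /semigroup.
set u := fun n => \sum_(k < n) t ^+ k / k`!%:R * iter k H g s.
set v := fun n => \sum_(k < n) t ^+ k / k`!%:R * iter k H g (sigma s).
have -> : (fun n => \sum_(k < n) t ^+ k / k`!%:R * iter k G (symmetrize sigma g) s) =
    fun n => (u n + v n) / 2.
  apply/funext => n; rewrite /u /v -big_split mulr_suml; apply: eq_bigr => k _ /=.
  by rewrite iter_symmetrize /symmetrize; ring.
apply: cvg_lim => //; apply: cvgMl; apply: cvgD; exact: semigroup_series_cvg.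
Qed.

End Symmetrization.

Section TwoParticleGenerators.
Context {R : realType} (alpha alphaL alphaR beta : R) {N : nat}.

Let scaleE (a r : R) : a *: r = a * r.
Proof. by []. Qed.

Lemma genA_is_linear : linear (genA alpha alphaL alphaR beta (N:=N)).
Proof.
move=> a u v; apply/funext => x; rewrite !fctE /=.
have sumE (c : R) (P : pred (site N)) (u' v' : site N -> R) :
    \sum_(z | P z) alpha * ((c * u' z + v' z) - (c * u' x + v' x)) =
    c * \sum_(z | P z) alpha * (u' z - u' x) + \sum_(z | P z) alpha * (v' z - v' x).
  by rewrite mulr_sumr -big_split; apply: eq_bigr => z _ /=; ring.
rewrite /genA /= sumE !scaleE.
by case: ifP => _; case: ifP => _; case: ifP => _; ring.
Qed.

HB.instance Definition _ := GRing.isLinear.Build R (site N -> R) (site N -> R) *:%R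
  (genA alpha alphaL alphaR beta (N:=N)) genA_is_linear.

Lemma genC_is_linear : linear (genC alpha alphaL alphaR beta (N:=N)).
Proof.
move=> a g h; apply/funext => -[x y].
rewrite !fctE /genC /= !linear_comb /=.
by rewrite !scaleE; case: ifP => _; ring.
Qed.

HB.instance Definition _ := GRing.isLinear.Build R (pstate N -> R) (pstate N -> R) *:%R
  (genC alpha alphaL alphaR beta (N:=N)) genC_is_linear.

Lemma site_interiorE (x : site N) :
  (x != 0%N :> nat) && (x != N :> nat) = (0 < x < N)%N.
Proof.
have x_le_N := ltn_ord x.
by apply/idP/idP => /andP[x_lb x_ub]; apply/andP; split; lia.
Qed.

Lemma adjacent_interiorE (x y : site N) :
  [&& (x != 0%N :> nat), (x != N :> nat), (y != 0%N :> nat), (y != N :> nat)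
    & (x == y.+1 :> nat) || (y == x.+1 :> nat)]
  = [&& (0 < x < N)%N, (0 < y < N)%N & (x == y.+1 :> nat) || (y == x.+1 :> nat)].
Proof. by rewrite -site_interiorE -site_interiorE !andbA. Qed.

Lemma genB_symmetrize (g : pstate N -> R) :
  genB alpha alphaL alphaR beta (symmetrize swap_pair g)
  = symmetrize swap_pair (genC alpha alphaL alphaR beta g).
Proof.
apply/funext => -[x y]; rewrite /genB /genC /symmetrize /swap_pair /= !linear_avg /=.
rewrite adjacent_interiorE (andbCA (0 < y < N)%N) (orbC (y == x.+1 :> nat)).
by case: ifP => _; ring.
Qed.

End TwoParticleGenerators.

Theorem proposition4p5 (R : realType) (alpha alphaL alphaR beta : R)
  (halpha : 0 < alpha) (halphaL : 0 < alphaL) (halphaR : 0 < alphaR)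
  (hbeta : 0 <= beta) (N : nat) (hN : (0 < N)%N) (x y : site N) (t : R)
  (ht : 0 <= t) (f : pstate N -> R) (hf : forall a b, f (a, b) = f (b, a)) :
  semigroup (genB alpha alphaL alphaR beta (N:=N)) t f (x, y)
  = 1 / 2 * semigroup (genC alpha alphaL alphaR beta (N:=N)) t f (x, y)
    + 1 / 2 * semigroup (genC alpha alphaL alphaR beta (N:=N)) t f (y, x).
Proof.
have f_sym : symmetrize swap_pair f = f by apply: symmetrize_id => -[a b]; rewrite hf.
rewrite -{1}f_sym (semigroup_symmetrize (genB_symmetrize alpha alphaL alphaR beta)) /=.
ring.
Qed.
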